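(* Let $n,a,b$ be nonnegative integers with $n\ge a+b+5$ and $b\ge 2$. Then the graph $F_n(a,b)$ is $K_4^-$-saturated.
   Context: All graphs are finite and simple. $K_4^-$ denotes the graph obtained from $K_4$ by deleting one edge. A graph $G$ is $K_4^-$-saturated if $G$ contains no copy of $K_4^-$ but for every pair of nonadjacent vertices $u,v$ of $G$, $G+uv$ contains a copy of $K_4^-$. For nonnegative integers $n,a,b$ with $n\ge a+b+5$, the graph $F_n(a,b)$ is defined as follows. Its vertex set is the disjoint union $I\cup A_1\cup A_2\cup B_1\cup B_2\cup C$, where $I=\{x\}$, $A_1=\{u_1,u_2\}$, $B_1=\{v_1,v_2\}$, $|A_2|=a$, $|B_2|=b$, $|C|=n-a-b-5$ (so it has $n$ vertices). Its edges are: all pairs between $A_1\cup A_2\cup C$ and $B_2$; all pairs between $A_2$ and $B_1$; all pairs between $x$ and $A_1\cup B_1\cup C$; and the two edges $u_1v_1$ and $u_2v_2$. There are no other edges. *)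

From mathcomp Require Import all_boot.
Set Implicit Arguments. Unset Strict Implicit. Unset Printing Implicit Defensive.

(* A finite simple graph is a symmetric irreflexive relation e : rel T on a finType T. *)

Definition has_K4minus (T : finType) (e : rel T) : Prop :=
  exists p q r s : T,
    [/\ uniq [:: p; q; r; s],
        [&& e p q, e p r & e p s] & e q r && e q s].

Definition add_edge (T : finType) (e : rel T) (u v : T) : rel T :=
  fun x y => [|| e x y, (x == u) && (y == v) | (x == v) && (y == u)].

Definition K4minus_saturated (T : finType) (e : rel T) : Prop :=
  ~ has_K4minus e /\
  forall u v : T, u != v -> ~~ e u v -> has_K4minus (add_edge e u v).

(* The graph F_n(a,b) on vertex set 'I_n. Vertices are numbered:
   0 = x (part I), 1 = u1, 2 = u2 (A1), 3 = v1, 4 = v2 (B1),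
   [5, 5+a) = A2, [5+a, 5+a+b) = B2, [5+a+b, n) = C. *)
Inductive Fpart := PI | PA1 | PB1 | PA2 | PB2 | PC.

Definition Fpart_of (a b i : nat) : Fpart :=
  if i == 0 then PI
  else if i < 3 then PA1
  else if i < 5 then PB1
  else if i < 5 + a then PA2
  else if i < 5 + a + b then PB2
  else PC.

Definition inA1A2C (p : Fpart) : bool :=
  match p with PA1 | PA2 | PC => true | _ => false end.
Definition isB2 (p : Fpart) : bool := if p is PB2 then true else false.
Definition isA2 (p : Fpart) : bool := if p is PA2 then true else false.
Definition isB1 (p : Fpart) : bool := if p is PB1 then true else false.
Definition isI (p : Fpart) : bool := if p is PI then true else false.
Definition inA1B1C (p : Fpart) : bool :=
  match p with PA1 | PB1 | PC => true | _ => false end.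

Definition F_edge_dir (a b i j : nat) : bool :=
  let pi := Fpart_of a b i in
  let pj := Fpart_of a b j in
  [|| inA1A2C pi && isB2 pj,
      isA2 pi && isB1 pj,
      isI pi && inA1B1C pj,
      (i == 1) && (j == 3)
    | (i == 2) && (j == 4)].

Definition F_graph (n a b : nat) : rel 'I_n :=
  fun i j => F_edge_dir a b i j || F_edge_dir a b j i.
Arguments F_graph : clear implicits.

From mathcomp Require Import all_boot zify.

Set Implicit Arguments.
Unset Strict Implicit.
Unset Printing Implicit Defensive.

(* F_n(a,b) is a blow-up of the 8-vertex graph F_8(1,1): the vertices x, u1,
   u2, v1, v2 stay single and each of the independent sets A2, B2, C shrinks to
   one vertex.  The only triangles of F_8(1,1) are x u1 v1 and x u2 v2, which
   share no edge, so the two triangles p q r and p q s of a K4^- in F_n(a,b)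
   project onto the same triangle; then r and s lie in the same single class,
   i.e. r = s.  Conversely, for a non-edge uv the classes of u and v already
   determine a K4^- of F_n(a,b) + uv built from u, v, the five single vertices
   and two vertices of B2 (this is where b >= 2 is needed), distinctness being
   read off the classes.  Both facts about the finitely many class
   configurations are checked by computation. *)

Definition K4minus_pattern (P : Type) (h : rel P) (p q r s : P) : bool :=
  [&& h p q, h p r, h p s, h q r & h q s].

Section Blowup.

Variables (T : finType) (P : eqType) (e : rel T) (h : rel P) (f : T -> P).
Hypothesis e_blowup : forall x y, e x y = h (f x) (f y).

Variables (dom : seq P) (singleton : pred P).
Hypothesis f_dom : forall x, f x \in dom.
Hypothesis singleton_inj : forall x y, singleton (f x) -> f x = f y -> x = y.

Definition K4minus_collapses : bool :=
  all (fun p => all (fun q => all (fun r => all (fun s =>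
    K4minus_pattern h p q r s ==> (r == s) && singleton r) dom) dom) dom) dom.

Lemma blowup_K4minus_free : K4minus_collapses -> ~ has_K4minus e.
Proof.
move=> collapse [p [q [r [s [uniq_pqrs /and3P[pq pr ps] /andP[qr qs]]]]]].
have /andP[/eqP frs singleton_r] : (f r == f s) && singleton (f r).
  move: collapse => /allP/(_ _ (f_dom p))/allP/(_ _ (f_dom q)).
  move=> /allP/(_ _ (f_dom r))/allP/(_ _ (f_dom s))/implyP; apply.
  by rewrite /K4minus_pattern -!e_blowup pq pr ps qr qs.
move: uniq_pqrs; rewrite (singleton_inj singleton_r frs) /=.
by rewrite mem_seq1 eqxx !andbF.
Qed.

Variable anchor_classes : seq P.

Section Witness.

Variables cu cv : P.

(* Witnesses are indices into [u :: v :: anchors] (see [decode]), where u, v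
   have classes cu, cv and carry the new edge; two indices surely denote
   distinct vertices when both point among u, v or both among the
   duplicate-free anchors, or when their classes differ. *)

Definition vertex_classes : seq P := [:: cu, cv & anchor_classes].

Definition witness_class (s : nat) : P := nth cu vertex_classes s.

Definition witness_edge (s t : nat) : bool :=
  [&& s < 2, t < 2 & s != t] || h (witness_class s) (witness_class t).

Definition witness_apart (s t : nat) : bool :=
  (s != t) && ((s < 2) == (t < 2)) || (witness_class s != witness_class t).

Definition K4minus_witness (p q r s : nat) : bool :=
  [&& witness_apart p q, witness_apart p r, witness_apart p s,
      witness_apart q r, witness_apart q s, witness_apart r s
    & K4minus_pattern witness_edge p q r s].

Definition has_K4minus_witness : bool :=
  let idx := iota 0 (size vertex_classes) in
  has (fun p => has (fun q => has (fun r => has (fun s =>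
    K4minus_witness p q r s) idx) idx) idx) idx.

End Witness.

Definition saturation_witnessed : bool :=
  all (fun cu => all (fun cv =>
    ~~ h cu cv && ((cu != cv) || ~~ singleton cu) ==> has_K4minus_witness cu cv)
  dom) dom.

Variable anchors : seq T.
Hypotheses (anchors_uniq : uniq anchors)
           (anchors_class : map f anchors = anchor_classes).

Section Decode.

Variables u v : T.

Definition decode (s : nat) : T := nth u [:: u, v & anchors] s.

Lemma decode_class s : s < (size anchors).+2 ->
  f (decode s) = witness_class (f u) (f v) s.
Proof.
move=> s_lt; rewrite /witness_class /vertex_classes -anchors_class.
by rewrite -!map_cons (nth_map u).
Qed.

Lemma decode_apart s t : u != v ->
  s < (size anchors).+2 -> t < (size anchors).+2 ->
  witness_apart (f u) (f v) s t -> decode s != decode t.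
Proof.
move=> uv s_lt t_lt /orP[/andP[st same_side] | classes_neq]; last first.
  by apply: contraNneq classes_neq => dst; rewrite -!decode_class // dst.
case: s t s_lt t_lt st same_side => [|[|s]] [|[|t]] //= s_lt t_lt st _.
  by rewrite eq_sym.
by rewrite /decode /= nth_uniq.
Qed.

Lemma decode_edge s t : s < (size anchors).+2 -> t < (size anchors).+2 ->
  witness_edge (f u) (f v) s t -> add_edge e u v (decode s) (decode t).
Proof.
move=> s_lt t_lt /orP[/and3P[] | hst].
  by case: s t {s_lt t_lt} => [|[|s]] [|[|t]] //= _ _ _;
    rewrite /add_edge !eqxx ?orbT.
by rewrite /add_edge e_blowup !decode_class // hst.
Qed.

Lemma witness_add_edge_K4minus : u != v ->
  has_K4minus_witness (f u) (f v) -> has_K4minus (add_edge e u v).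
Proof.
have idx_lt k : k \in iota 0 (size (vertex_classes (f u) (f v))) ->
    k < (size anchors).+2.
  by rewrite mem_iota /= -anchors_class size_map.
move=> uv /hasP[p /idx_lt p_lt /hasP[q /idx_lt q_lt]].
move=> /hasP[r /idx_lt r_lt /hasP[s /idx_lt s_lt]].
move=> /and5P[apq apr aps aqr /and3P[aqs ars /and5P[epq epr eps eqr eqs]]].
exists (decode p), (decode q), (decode r), (decode s); split.
- by rewrite /= !inE !negb_or !decode_apart.
- by rewrite !decode_edge.
- by rewrite !decode_edge.
Qed.

End Decode.

Lemma blowup_K4minus_saturated :
  K4minus_collapses -> saturation_witnessed -> K4minus_saturated e.
Proof.
move=> collapse witnessed; split; first exact: blowup_K4minus_free.
move=> u v uv /negbTE euv; apply: witness_add_edge_K4minus => //.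
move: witnessed => /allP/(_ _ (f_dom u))/allP/(_ _ (f_dom v))/implyP; apply.
rewrite -e_blowup euv /=; apply: contraTT uv.
rewrite negb_or !negbK => /andP[/eqP fuv singleton_u].
by apply/eqP; apply: singleton_inj.
Qed.

End Blowup.

Definition Fclass (a b i : nat) : nat :=
  if i < 5 then i
  else if i < 5 + a then 5
  else if i < 5 + a + b then 6
  else 7.

(* F_8(1,1), whose vertices 5, 6, 7 stand for A2, B2, C. *)
Definition Fpattern : rel nat :=
  fun c d => F_edge_dir 1 1 c d || F_edge_dir 1 1 d c.

Lemma Fpart_of_Fclass a b i : Fpart_of a b i = Fpart_of 1 1 (Fclass a b i).
Proof. by rewrite /Fclass /Fpart_of; repeat case: ifP => //; lia. Qed.

Lemma Fclass_eq_small a b i k : k < 5 -> (Fclass a b i == k) = (i == k).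
Proof. by rewrite /Fclass => k_lt5; repeat case: ifP; lia. Qed.

Lemma F_graph_blowup n a b (i j : 'I_n) :
  F_graph n a b i j = Fpattern (Fclass a b i) (Fclass a b j).
Proof.
rewrite /F_graph /Fpattern /F_edge_dir !(Fpart_of_Fclass a b).
by rewrite !Fclass_eq_small.
Qed.

Lemma Fclass_dom a b i : Fclass a b i \in iota 0 8.
Proof. by rewrite mem_iota /Fclass; repeat case: ifP; lia. Qed.

Lemma Fclass_small a b i : Fclass a b i < 5 -> Fclass a b i = i.
Proof. by rewrite /Fclass; repeat case: ifP; lia. Qed.

Lemma Fclass_singleton_inj n a b (i j : 'I_n) :
  Fclass a b i < 5 -> Fclass a b i = Fclass a b j -> i = j.
Proof.
move=> small_i eq_ij; have small_j : Fclass a b j < 5 by rewrite -eq_ij.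
apply: val_inj; rewrite /= -(Fclass_small small_i).
by rewrite -(Fclass_small small_j) eq_ij.
Qed.

Definition Fanchors n a : seq 'I_n :=
  pmap insub [:: 0; 1; 2; 3; 4; 5 + a; 6 + a].

Lemma Fanchors_uniq n a : uniq (Fanchors n a).
Proof. by apply: pmap_sub_uniq; rewrite /= !inE; lia. Qed.

Lemma Fanchors_class n a b : a + b + 5 <= n -> 2 <= b ->
  map (fun i : 'I_n => Fclass a b i) (Fanchors n a) = [:: 0; 1; 2; 3; 4; 6; 6].
Proof.
move=> n_ge b_ge2.
rewrite (map_comp (Fclass a b) val) (pmap_filter (insubK _)).
rewrite (eq_filter (isSome_insub _)) (all_filterP _); last by rewrite /=; lia.
have B2_class k : 5 + a <= k < 5 + a + b -> Fclass a b k = 6.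
  by rewrite /Fclass; repeat case: ifP; lia.
by rewrite /= (B2_class (5 + a)) ?(B2_class (6 + a)) //; lia.
Qed.

Lemma Fpattern_K4minus_collapses :
  K4minus_collapses Fpattern (iota 0 8) (fun c => c < 5).
Proof. by vm_compute. Qed.

Lemma Fpattern_saturation_witnessed :
  saturation_witnessed Fpattern (iota 0 8) (fun c => c < 5)
    [:: 0; 1; 2; 3; 4; 6; 6].
Proof. by vm_compute. Qed.

Theorem lemma2p2 (n a b : nat) :
  a + b + 5 <= n -> 2 <= b -> K4minus_saturated (F_graph n a b).
Proof.
move=> n_ge b_ge2.
apply: (blowup_K4minus_saturated (@F_graph_blowup n a b) (@Fclass_dom a b)
          (@Fclass_singleton_inj n a b) (Fanchors_uniq n a)
          (Fanchors_class n_ge b_ge2)).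
- exact: Fpattern_K4minus_collapses.
- exact: Fpattern_saturation_witnessed.
Qed.
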